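(* Let $0\le\underline{s}<\overline{s}\le1$. The set of locally zero signals $$F_{zero}=\{f\in F^\infty_{(\underline{s},\overline{s})}: \exists\,\underline{s}<z_1<z_2<\overline{s}\text{ such that } f(s)=0\text{ for a.e. } s\in[z_1,z_2]\}$$ is of first category in $F^\infty_{(\underline{s},\overline{s})}$ (with respect to the topology induced by the $L_\infty$-norm).
   Context: $F^\infty_{(\underline{s},\overline{s})}=\{f\in L_\infty(\underline{s},\overline{s})\cap C^0(\underline{s},\overline{s}): \int_{\underline{s}}^{\overline{s}} f(s)\frac{1-2s}{s}ds=0,\ \int_{\underline{s}}^{\overline{s}} f=1,\ f\ge0,\ f(s)\frac{1-s}{s}\in L_\infty(\underline{s},\overline{s})\}$. *)

From HB Require Import structures.
From mathcomp Require Import all_boot all_order all_algebra.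
From mathcomp Require Import all_classical all_reals all_analysis.
Set Implicit Arguments. Unset Strict Implicit. Unset Printing Implicit Defensive.
Import Order.TTheory GRing.Theory Num.Theory.
Import numFieldNormedType.Exports.
Local Open Scope classical_set_scope.
Local Open Scope ring_scope.

Definition Linf_dist (R : realType) (a b : R) (f g : R -> R) : \bar R :=
  ereal_sup [set (`|f x - g x|)%:E | x in `]a, b[].

Definition Finf (R : realType) (a b : R) : set (R -> R) :=
  [set f : R -> R | {within `]a, b[, continuous f}
    /\ (exists M : R, forall s, s \in `]a, b[ -> `|f s| <= M)
    /\ (\int[lebesgue_measure]_(s in `]a, b[) ((f s : R) * (1 - 2 * s) / s)%:E = 0%:E)%E
    /\ (\int[lebesgue_measure]_(s in `]a, b[) ((f s : R))%:E = 1%:E)%E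
    /\ (forall s, s \in `]a, b[ -> 0 <= f s)
    /\ (exists M : R, forall s, s \in `]a, b[ -> `|f s * (1 - s) / s| <= M)].

Definition Fzero (R : realType) (a b : R) : set (R -> R) :=
  [set f : R -> R | Finf a b f /\ exists z1 z2 : R, a < z1 /\ z1 < z2 /\ z2 < b /\
     {ae lebesgue_measure, forall s, s \in `[z1, z2] -> f s = 0}].

Definition rel_open (R : realType) (a b : R) (X U : set (R -> R)) : Prop :=
  U `<=` X /\ forall f, U f -> exists e : R, 0 < e /\
    forall h, X h -> (Linf_dist a b f h < e%:E)%E -> U h.

(* A is nowhere dense in X: every nonempty open subset of X contains a
   nonempty open subset of X disjoint from A (closure of A has empty interior). *)
Definition nowhere_dense_in (R : realType) (a b : R) (X A : set (R -> R)) : Prop :=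
  forall U, rel_open a b X U -> U !=set0 ->
    exists V, rel_open a b X V /\ V !=set0 /\ V `<=` U /\ V `&` A = set0.

Definition first_category_in (R : realType) (a b : R) (X A : set (R -> R)) : Prop :=
  exists An : nat -> set (R -> R),
    (forall n, nowhere_dense_in a b X (An n)) /\ A `<=` \bigcup_n An n.

From HB Require Import structures.
From mathcomp Require Import all_boot all_order all_algebra.
From mathcomp Require Import all_classical all_reals all_analysis.
From mathcomp Require Import ring lra.
Import Order.TTheory GRing.Theory Num.Theory.
Import numFieldNormedType.Exports.
Local Open Scope classical_set_scope.
Local Open Scope ring_scope.

(* Write [Fzero_ge a b c] for the signals of F vanishing a.e. on some [z1, z2]
   with z1 >= c.  Fzero is the union of these sets for c = 1/(n+1), so it is
   enough that each of them is nowhere dense.  F is convex and, as soon as it is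
   nonempty, it contains some p with p(s) >= k s: nonemptiness forces the moment
   weight 1 - 2s to change sign on (a, b), so a density s v(s) with
   v = 1 + alpha max(+-(1 - 2s), 0) can be balanced.  Near any f in F the signal
   g = (1 - t) f + t p lies in F, is L_infty-close to f and satisfies
   g(s) >= t k s; every function at distance < t k c from g is then positive on
   [c, b), so the small balls around such g avoid [Fzero_ge a b c]. *)

Lemma itv_gt0 {R : realType} {a b s : R} : 0 <= a -> s \in `]a, b[ -> 0 < s.
Proof. by move=> a0; rewrite in_itv /= => /andP[+ _]; apply: le_lt_trans. Qed.

Section Linf_ball.
Context {R : realType} {a b : R}.

Lemma Linf_dist_ub (f g : R -> R) {s : R} : s \in `]a, b[ ->
  (`|f s - g s|%:E <= Linf_dist a b f g)%E.
Proof. by move=> Is; apply: ereal_sup_ubound; exists s. Qed.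

Lemma Linf_dist_le {f g : R -> R} (r : R) :
  (forall s, s \in `]a, b[ -> `|f s - g s| <= r) -> (Linf_dist a b f g <= r%:E)%E.
Proof. by move=> fg; apply: ub_ereal_sup => _ [s Is <-]; rewrite lee_fin fg. Qed.

Lemma Linf_dist_triangle (f g h : R -> R) :
  (Linf_dist a b f h <= Linf_dist a b f g + Linf_dist a b g h)%E.
Proof.
apply: ub_ereal_sup => _ [s Is <-].
apply: le_trans (leeD (Linf_dist_ub f g Is) (Linf_dist_ub g h Is)).
rewrite -EFinD lee_fin; apply: le_trans (ler_normD _ _); by rewrite addrA subrK.
Qed.

Hypothesis ab : a < b.

Lemma Linf_dist_ge0 (f g : R -> R) : (0 <= Linf_dist a b f g)%E.
Proof.
have mid : (a + b) / 2 \in `]a, b[ by rewrite in_itv /= !midf_lt.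
exact: le_trans (Linf_dist_ub f g mid).
Qed.

Lemma rel_open_Linf_ball (X : set (R -> R)) (g : R -> R) (r : R) :
  rel_open a b X [set h | X h /\ (Linf_dist a b g h < r%:E)%E].
Proof.
split=> [h []//|h [Xh]]; have := Linf_dist_ge0 g h.
case dgh : (Linf_dist a b g h) => [y| |]//; rewrite lee_fin lte_fin => y0 yr.
exists (r - y); split=> [|h' Xh' dhh']; first by rewrite subr_gt0.
split=> //; apply: le_lt_trans (Linf_dist_triangle g h h') _.
by rewrite dgh -(subrKC y r) EFinD lteD2lE.
Qed.

End Linf_ball.

Definition bounded_on_itv {R : realType} (a b : R) (h : R -> R) :=
  exists M : R, forall s, s \in `]a, b[ -> `|h s| <= M.

Section integrals_on_itv.
Context {R : realType} {a b : R}.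
Local Notation mu := (@lebesgue_measure R).
Local Notation I := (`]a, b[%classic : set R).

(* Used implicitly: [//] discharges the finiteness premise of
   [measurable_bounded_integrable] with it. *)
Let mu_I_fin : (mu I < +oo)%E.
Proof. by rewrite lebesgue_measure_itv; case: ifP => _; rewrite ?ltry. Qed.

Lemma integrable_bounded_continuous (h : R -> R) :
  {within I, continuous h} -> bounded_on_itv a b h -> mu.-integrable I (EFin \o h).
Proof.
move=> hc [M hM]; apply: measurable_bounded_integrable => //.
- exact: measurable_realfun.subspace_continuous_measurable_fun hc.
- exists M; split=> [|y My x Ix]; first exact: num_real.
  exact: le_trans (hM x Ix) (ltW My).
Qed.

Lemma Rintegral_EFin (h : R -> R) : mu.-integrable I (EFin \o h) ->
  (\int[mu]_(s in I) (h s)%:E)%E = (\int[mu]_(s in I) h s)%:E.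
Proof. by move=> ih; rewrite fineK //; apply: integrable_fin_num ih. Qed.

Lemma integrable_scale (c : R) (h : R -> R) : mu.-integrable I (EFin \o h) ->
  mu.-integrable I (EFin \o (fun s => c * h s)).
Proof. by move=> ih; apply: (eq_integrable _ _ _ _ (integrableZl _ c ih)). Qed.

Lemma integrable_lin (c1 c2 : R) (h1 h2 : R -> R) :
  mu.-integrable I (EFin \o h1) -> mu.-integrable I (EFin \o h2) ->
  mu.-integrable I (EFin \o (fun s => c1 * h1 s + c2 * h2 s)).
Proof.
move=> i1 i2; apply: (eq_integrable _ _ _ _
  (integrableD _ (integrableZl _ c1 i1) (integrableZl _ c2 i2))) => //.
Qed.

Lemma Rintegral_lin (c1 c2 : R) (h1 h2 : R -> R) :
  mu.-integrable I (EFin \o h1) -> mu.-integrable I (EFin \o h2) ->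
  \int[mu]_(s in I) (c1 * h1 s + c2 * h2 s) =
  c1 * \int[mu]_(s in I) h1 s + c2 * \int[mu]_(s in I) h2 s.
Proof.
move=> i1 i2.
by rewrite RintegralD ?RintegralZl //; apply: integrable_scale.
Qed.

Lemma Rintegral_gt0 (h : R -> R) (c d del : R) :
  a <= c -> c < d -> d <= b -> 0 < del -> mu.-integrable I (EFin \o h) ->
  (forall s, s \in `]a, b[ -> 0 <= h s) -> (forall s, c < s < d -> del <= h s) ->
  0 < \int[mu]_(s in I) h s.
Proof.
move=> ac cd db del0 ih h0 hdel.
have mh := measurable_int _ ih.
have cdI : `]c, d[ `<=` I.
  by move=> x; rewrite /= !in_itv /= => /andP[cx xd]; apply/andP; split; lra.
suff : ((del * (d - c))%:E <= \int[mu]_(s in I) (h s)%:E)%E.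
  by rewrite Rintegral_EFin // lee_fin; apply: lt_le_trans; rewrite mulr_gt0 ?subr_gt0.
apply: le_trans (ge0_subset_integral mu _ _ mh _ cdI) => //.
have -> : (del * (d - c))%:E = (\int[mu]_(s in `]c, d[) (cst del%:E) s)%E.
  by rewrite integral_cst //= lebesgue_measure_itv /= lte_fin cd -EFinD.
apply: ge0_le_integral => //.
- by move=> x _; rewrite lee_fin ltW.
- exact: measurable_funS cdI mh.
Qed.

Lemma continuous_bounded_on_itv {h : R -> R} : a <= b -> continuous h -> bounded_on_itv a b h.
Proof.
move=> ab hc.
have nc : continuous (fun s => `|h s|).
  by move=> x; apply: continuous_comp (hc x) _; exact: norm_continuous.
have [c _ cmax] := EVT_max ab (continuous_subspaceT nc).
by exists `|h c| => s Is; apply: cmax; apply: subset_itv_oo_cc.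
Qed.

Lemma integrable_continuous {h : R -> R} : a <= b -> continuous h ->
  mu.-integrable I (EFin \o h).
Proof.
move=> ab hc; apply: integrable_bounded_continuous; last exact: continuous_bounded_on_itv.
exact: continuous_subspaceT.
Qed.

Lemma not_ae_eq0_itv {h : R -> R} {z1 z2 : R} : z1 < z2 ->
  (forall s, z1 <= s <= z2 -> h s != 0) ->
  ~ {ae mu, forall s, s \in `[z1, z2] -> h s = 0}.
Proof.
move=> z12 hz [N [mN N0 sub]].
have zN : `[z1, z2] `<=` N by move=> s zs; apply: sub => /(_ zs); apply/eqP/hz.
have : (mu `[z1, z2] <= mu N)%E by rewrite le_measure ?inE //; exact: measurable_itv.
by rewrite N0 lebesgue_measure_itv /= lte_fin z12 -EFinD lee_fin subr_le0 leNgt z12.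
Qed.

End integrals_on_itv.

Section Finf_props.
Context {R : realType} {a b : R}.
Hypothesis a0 : 0 <= a.
Local Notation mu := (@lebesgue_measure R).
Local Notation I := (`]a, b[%classic : set R).

Lemma continuous_within_weighted (f : R -> R) (c : R) : {within I, continuous f} ->
  {within I, continuous (fun s => f s * (1 - c * s) / s)}.
Proof.
move=> fc.
have lc : {within I, continuous (fun s => 1 - c * s)}.
  apply: continuous_subspaceT => y.
  by apply: cvgB; [exact: cvg_cst | apply: cvgMr; exact: cvg_id].
have ic : {within I, continuous (fun s : R => s^-1)}.
  apply: continuous_subspace_itv => y /(itv_gt0 a0) y0.
  by apply: cvgV; [rewrite gt_eqF | exact: cvg_id].
by move=> x; apply: cvgM; [apply: cvgM; [exact: fc | exact: lc] | exact: ic].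
Qed.

Lemma Finf_integrals {f : R -> R} : Finf a b f ->
  [/\ mu.-integrable I (EFin \o f),
      mu.-integrable I (EFin \o (fun s => f s * (1 - 2 * s) / s)),
      \int[mu]_(s in I) f s = 1 &
      \int[mu]_(s in I) (f s * (1 - 2 * s) / s) = 0].
Proof.
case=> fc [[M fM] [fw [f1 [_ [M' fM']]]]].
have if1 : mu.-integrable I (EFin \o f) by apply: integrable_bounded_continuous => //; exists M.
have ifw : mu.-integrable I (EFin \o (fun s => f s * (1 - 2 * s) / s)).
  apply: integrable_bounded_continuous; first exact: continuous_within_weighted.
  exists (M' + M) => s Is.
  have -> : f s * (1 - 2 * s) / s = f s * (1 - s) / s - f s.
    by field; rewrite gt_eqF // (itv_gt0 a0 Is).
  by apply: le_trans (ler_normB _ _) _; apply: lerD; [exact: fM' | exact: fM].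
by split=> //; apply: EFin_inj; rewrite -Rintegral_EFin.
Qed.

Lemma Finf_convex (f g : R -> R) (t : R) : 0 <= t <= 1 ->
  Finf a b f -> Finf a b g -> Finf a b (fun s => (1 - t) * f s + t * g s).
Proof.
case/andP=> t0 t1 Xf Xg.
have [if1 ifw f1 fw0] := Finf_integrals Xf.
have [ig1 igw g1 gw0] := Finf_integrals Xg.
case: Xf => fc [[Mf fM] [_ [_ [f0 [Nf fN]]]]].
case: Xg => gc [[Mg gM] [_ [_ [g0 [Ng gN]]]]].
have t0' : 0 <= 1 - t by rewrite subr_ge0.
have convex_bound (u v : R -> R) (Mu Mv : R) :
    (forall s, s \in `]a, b[ -> `|u s| <= Mu) -> (forall s, s \in `]a, b[ -> `|v s| <= Mv) ->
    forall s, s \in `]a, b[ -> `|(1 - t) * u s + t * v s| <= (1 - t) * Mu + t * Mv.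
  move=> uM vM s Is; apply: le_trans (ler_normD _ _) _.
  by rewrite !normrM ger0_norm // (ger0_norm t0) lerD // ler_wpM2l // ?uM ?vM.
split; first by move=> x; apply: cvgD; apply: cvgMr; [exact: fc | exact: gc].
split; first by exists ((1 - t) * Mf + t * Mg); exact: convex_bound.
split.
  rewrite (@eq_integral _ _ _ mu I
    (fun s => ((1 - t) * (f s * (1 - 2 * s) / s) + t * (g s * (1 - 2 * s) / s))%:E)).
    by rewrite Rintegral_EFin ?integrable_lin // Rintegral_lin // fw0 gw0 !mulr0 addr0.
  by move=> s _; congr (_%:E); ring.
split; first by rewrite Rintegral_EFin ?integrable_lin // Rintegral_lin // f1 g1 !mulr1 subrK.
split; first by move=> s Is; rewrite addr_ge0 // mulr_ge0 // ?f0 ?g0.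
exists ((1 - t) * Nf + t * Ng) => s Is.
have -> : ((1 - t) * f s + t * g s) * (1 - s) / s =
  (1 - t) * (f s * (1 - s) / s) + t * (g s * (1 - s) / s) by ring.
exact: (convex_bound (fun s => f s * (1 - s) / s) (fun s => g s * (1 - s) / s)).
Qed.

Lemma Finf_signed_weight_eq0 (e : R) :
  (forall s, s \in `]a, b[ -> 0 < e * (1 - 2 * s)) -> Finf a b = set0.
Proof.
move=> ew; apply/seteqP; split=> // f Xf.
have [if1 ifw f1 fw0] := Finf_integrals Xf.
have f0 : forall s, s \in `]a, b[ -> 0 <= f s by case: Xf => _ [_ [_ [_ []]]].
pose u s := e * (f s * (1 - 2 * s) / s).
have uE s : u s = f s * (e * (1 - 2 * s)) / s by rewrite /u; ring.
have u0 s : s \in `]a, b[ -> 0 <= u s.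
  move=> Is; rewrite uE; apply: divr_ge0; last exact: ltW (itv_gt0 a0 Is).
  by apply: mulr_ge0; [exact: f0 | exact: ltW (ew s Is)].
have iu : mu.-integrable I (EFin \o u) by exact: integrable_scale.
have : (\int[mu]_(s in I) `|(EFin \o u) s|)%E = 0.
  rewrite (@eq_integral _ _ _ mu I (EFin \o u)); last first.
    by move=> s /set_mem Is /=; rewrite ger0_norm ?u0.
  by rewrite Rintegral_EFin // RintegralZl // fw0 mulr0.
move/(ae_eq_integral_abs mu (measurable_itv _) (measurable_int _ iu)) => u_ae0.
have f_ae0 : ae_eq mu I (EFin \o f) (cst 0%E).
  apply: filterS u_ae0 => s u_s0 Is; have /eqP := u_s0 Is; rewrite /= eqe uE.
  rewrite mulf_eq0 invr_eq0 (gt_eqF (itv_gt0 a0 Is)) orbF mulf_eq0 (gt_eqF (ew s Is)) orbF.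
  by move/eqP->.
have : (\int[mu]_(s in I) (f s)%:E = \int[mu]_(s in I) (cst 0%E) s)%E.
  by apply: ae_eq_integral => //; exact: measurable_int if1.
by rewrite integral0 Rintegral_EFin // f1 => /eqP; rewrite eqe oner_eq0.
Qed.

Lemma Finf_half {f : R -> R} : Finf a b f -> a < 2^-1 < b.
Proof.
move=> Xf; rewrite !ltNge; apply/andP; split; apply/negP => half.
- rewrite (@Finf_signed_weight_eq0 (-1)) in Xf => // s.
  by rewrite in_itv /= => /andP[sa _]; lra.
- rewrite (@Finf_signed_weight_eq0 1) in Xf => // s.
  by rewrite in_itv /= => /andP[_ sb]; lra.
Qed.

End Finf_props.

Section positive_element.
Context {R : realType} {a b : R}.
Hypotheses (a0 : 0 <= a) (ab : a <= b).
Local Notation mu := (@lebesgue_measure R).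
Local Notation I := (`]a, b[%classic : set R).

Let affine_continuous (c d : R) : continuous (fun s : R => c - d * s).
Proof. by move=> x; apply: cvgB; [exact: cvg_cst | apply: cvgMr; exact: cvg_id]. Qed.

Lemma Rintegral_pos_part_gt0 (l : R -> R) (c d del : R) :
  a <= c -> c < d -> d <= b -> 0 < del -> continuous l ->
  (forall s, c < s < d -> del <= l s) ->
  0 < \int[mu]_(s in I) (Num.max (l s) 0 * l s).
Proof.
move=> ac cd db del0 lc ldel.
apply: (@Rintegral_gt0 _ a b _ c d (del * del) ac cd db); first exact: mulr_gt0.
- apply: integrable_continuous => // x.
  by apply: cvgM; [exact: (max_fun_continuous lc (@cst_continuous _ _ 0)) | exact: lc].
- by move=> s _; have [l0|_] := leP 0 (l s); rewrite ?mul0r ?mulr_ge0.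
- move=> s /ldel dl; have [l0|l0] := leP 0 (l s); first by rewrite ler_pM // ltW.
  lra.
Qed.

Lemma exists_balanced_weight_of (phi : R -> R) (al : R) :
  continuous phi -> (forall s, 0 <= phi s) -> 0 <= al ->
  \int[mu]_(s in I) (1 - 2 * s) + al * \int[mu]_(s in I) (phi s * (1 - 2 * s)) = 0 ->
  exists v : R -> R, [/\ continuous v, forall s, 1 <= v s &
    \int[mu]_(s in I) (v s * (1 - 2 * s)) = 0].
Proof.
move=> phic phi0 al0 bal; exists (fun s => 1 + al * phi s); split.
- by move=> x; apply: cvgD; [exact: cvg_cst | apply: cvgMr; exact: phic].
- by move=> s; rewrite lerDl mulr_ge0.
rewrite -[RHS]bal -[X in X + _]mul1r -Rintegral_lin.
- by apply: eq_Rintegral => s _; ring.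
- exact: integrable_continuous (affine_continuous 1 2).
apply: integrable_continuous => // x.
by apply: cvgM; [exact: phic | exact: (affine_continuous 1 2 x)].
Qed.

Lemma exists_balanced_weight : a < 2^-1 -> 2^-1 < b ->
  exists v : R -> R, [/\ continuous v, forall s, 1 <= v s &
    \int[mu]_(s in I) (v s * (1 - 2 * s)) = 0].
Proof.
have pos_part_continuous (c d : R) : continuous (fun s : R => Num.max (c - d * s) 0).
  exact: (max_fun_continuous (affine_continuous c d) (@cst_continuous _ _ 0)).
have pos_part_ge0 (c d s : R) : 0 <= Num.max (c - d * s) 0 by rewrite le_max lexx orbT.
move=> ah hb.
set K0 := \int[mu]_(s in I) (1 - 2 * s).
have [K0_lt0|K0_ge0] := ltP K0 0.
- set K1 := \int[mu]_(s in I) (Num.max (1 - 2 * s) 0 * (1 - 2 * s)).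
  have K1_gt0 : 0 < K1.
    apply: (@Rintegral_pos_part_gt0 _ a ((2 * a + 1) / 4) (2^-1 - a)) => //; try lra.
    by move=> s; lra.
  apply: (@exists_balanced_weight_of (fun s => Num.max (1 - 2 * s) 0) (- K0 / K1)) => //.
    by rewrite divr_ge0 ?oppr_ge0 ?ltW.
  by rewrite -/K0 -/K1; field; rewrite gt_eqF.
- set J := \int[mu]_(s in I) (Num.max (-1 - -2 * s) 0 * (-1 - -2 * s)).
  have J_gt0 : 0 < J.
    apply: (@Rintegral_pos_part_gt0 _ ((2 * b + 1) / 4) b (b - 2^-1)) => //; try lra.
    by move=> s; lra.
  set K1 := \int[mu]_(s in I) (Num.max (-1 - -2 * s) 0 * (1 - 2 * s)).
  have K1E : K1 = - J.
    rewrite /K1 /J -[RHS]mulN1r -RintegralZl //; first by apply: eq_Rintegral => s _; ring.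
    apply: integrable_continuous => // x.
    by apply: cvgM; [exact: pos_part_continuous | exact: (affine_continuous _ _ x)].
  apply: (@exists_balanced_weight_of (fun s => Num.max (-1 - -2 * s) 0) (K0 / J)) => //.
    exact: divr_ge0 K0_ge0 (ltW J_gt0).
  by rewrite -/K0 -/K1 K1E; field; rewrite gt_eqF.
Qed.

Lemma Finf_density (v : R -> R) : continuous v -> (forall s, 0 <= v s) ->
  \int[mu]_(s in I) (v s * (1 - 2 * s)) = 0 -> 0 < \int[mu]_(s in I) (s * v s) ->
  Finf a b (fun s => s * v s / \int[mu]_(s in I) (s * v s)).
Proof.
set N := \int[mu]_(s in I) (s * v s) => vc v0 vw N0.
have sv_continuous : continuous (fun s : R => s * v s).
  by move=> x; apply: cvgM; [exact: cvg_id | exact: vc].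
have p_continuous : continuous (fun s : R => s * v s / N).
  by move=> x; apply: cvgMl; exact: sv_continuous.
have pE (c s : R) : s \in `]a, b[ -> s * v s / N * (1 - c * s) / s = N^-1 * (v s * (1 - c * s)).
  by move=> /(itv_gt0 a0) s0; field; rewrite (gt_eqF N0) (gt_eqF s0).
have vw_continuous (c : R) : continuous (fun s : R => N^-1 * (v s * (1 - c * s))).
  by move=> x; apply: cvgMr; apply: cvgM; [exact: vc | exact: affine_continuous].
split; first exact: continuous_subspaceT.
split; first exact: continuous_bounded_on_itv.
split.
  rewrite (@eq_integral _ _ _ mu I (fun s => (N^-1 * (v s * (1 - 2 * s)))%:E)); last first.
    by move=> s /set_mem Is; rewrite pE.
  rewrite Rintegral_EFin; last exact: integrable_continuous.
  rewrite RintegralZl ?vw ?mulr0 //; apply: integrable_continuous => // x.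
  by apply: cvgM; [exact: vc | exact: (affine_continuous _ _ x)].
split.
  rewrite Rintegral_EFin; last exact: integrable_continuous.
  rewrite RintegralZr // -/N; last exact: integrable_continuous.
  by congr EFin; apply: divff; rewrite gt_eqF.
split; first by move=> s /(itv_gt0 a0) /ltW s0; rewrite divr_ge0 ?mulr_ge0 // ltW.
have [M vM] := continuous_bounded_on_itv ab (vw_continuous 1).
by exists M => s Is; rewrite -[s in 1 - s]mul1r pE // vM.
Qed.

Lemma exists_Finf_ge_linear : a < 2^-1 -> 2^-1 < b ->
  exists p k, [/\ Finf a b p, 0 < k & forall s, s \in `]a, b[ -> k * s <= p s].
Proof.
move=> ah hb; have [v [vc v1 vw]] := exists_balanced_weight ah hb.
have v0 s : 0 <= v s by apply: le_trans (v1 s).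
have sv_le s : 0 <= s -> s <= s * v s by move=> s0; rewrite ler_peMr.
set N := \int[mu]_(s in I) (s * v s).
have N_gt0 : 0 < N.
  have half_gt0 : (0 : R) < 2^-1 by rewrite invr_gt0.
  apply: (@Rintegral_gt0 _ a b _ 2^-1 b 2^-1 (ltW ah) hb) => //.
  - apply: integrable_continuous => // x.
    by apply: cvgM; [exact: cvg_id | exact: vc].
  - by move=> s /(itv_gt0 a0) /ltW s0; rewrite mulr_ge0.
  - move=> s /andP[hs _]; apply: le_trans (ltW hs) _.
    by apply: sv_le; apply: le_trans (ltW hs); exact: ltW.
exists (fun s => s * v s / N), N^-1; split.
- exact: Finf_density.
- by rewrite invr_gt0.
- move=> s /(itv_gt0 a0) /ltW s0; rewrite mulrC.
  by apply: ler_wpM2r; [rewrite invr_ge0 ltW | exact: sv_le].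
Qed.

End positive_element.

Definition Fzero_ge {R : realType} (a b c : R) : set (R -> R) :=
  [set f | Finf a b f /\ exists z1 z2 : R, c <= z1 /\ a < z1 /\ z1 < z2 /\ z2 < b /\
     {ae lebesgue_measure, forall s, s \in `[z1, z2] -> f s = 0}].

Section nowhere_dense.
Variables (R : realType) (a b : R).
Hypotheses (a0 : 0 <= a) (ab : a < b).

Lemma Finf_approx_ge_linear {f : R -> R} {e : R} : Finf a b f -> 0 < e ->
  exists g k, [/\ Finf a b g, (Linf_dist a b f g < e%:E)%E, 0 < k &
    forall s, s \in `]a, b[ -> k * s <= g s].
Proof.
move=> Xf e0; have /andP[ah hb] := Finf_half a0 Xf.
have [p [k [Xp k0 pk]]] := exists_Finf_ge_linear a0 (ltW ab) ah hb.
have f0 : forall s, s \in `]a, b[ -> 0 <= f s by case: Xf => _ [_ [_ [_ []]]].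
have [[Mf fM] [Mp pM]] : bounded_on_itv a b f /\ bounded_on_itv a b p.
  by case: Xf => _ [? _]; case: Xp => _ [].
pose B := `|Mf| + `|Mp|; pose t := e / (B + e).
have Be0 : 0 < B + e by rewrite ltr_wpDl ?addr_ge0.
have t0 : 0 < t by rewrite divr_gt0.
have t1 : t <= 1 by rewrite ler_pdivrMr // mul1r lerDr addr_ge0.
exists (fun s => (1 - t) * f s + t * p s), (t * k); split.
- by apply: Finf_convex => //; rewrite ltW.
- apply: le_lt_trans (Linf_dist_le (t * B) _) _.
    move=> s Is; have -> : f s - ((1 - t) * f s + t * p s) = t * (f s - p s) by ring.
    rewrite normrM (ger0_norm (ltW t0)); apply: ler_wpM2l; first exact: ltW.
    apply: le_trans (ler_normB _ _) _.
    apply: lerD; first exact: le_trans (fM s Is) (ler_norm _).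
    exact: le_trans (pM s Is) (ler_norm _).
  by rewrite lte_fin /t mulrAC ltr_pdivrMr // ltr_pM2l // ltrDl.
- by rewrite mulr_gt0.
- move=> s Is; rewrite -mulrA -[X in X <= _]add0r.
  apply: lerD; first by apply: mulr_ge0; [rewrite subr_ge0 | exact: f0].
  by apply: ler_wpM2l; [exact: ltW | exact: pk].
Qed.

Lemma Linf_ball_disjoint_Fzero_ge {g h : R -> R} {k c r : R} : 0 <= k -> r <= k * c ->
  (forall s, s \in `]a, b[ -> k * s <= g s) -> (Linf_dist a b g h < r%:E)%E ->
  ~ Fzero_ge a b c h.
Proof.
move=> k0 rkc gk dgh [_ [z1 [z2 [cz1 [az1 [z12 [z2b h0]]]]]]].
apply: (not_ae_eq0_itv z12 _ h0) => s /andP[z1s sz2].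
have Is : s \in `]a, b[.
  by rewrite in_itv /= (lt_le_trans az1 z1s) (le_lt_trans sz2 z2b).
have := le_lt_trans (Linf_dist_ub g h Is) dgh; rewrite lte_fin => ghr.
have kgs : k * c <= g s := le_trans (ler_wpM2l k0 (le_trans cz1 z1s)) (gk s Is).
apply/eqP => hs0; move: ghr; rewrite hs0 subr0 => ghr.
have := ler_norm (g s); lra.
Qed.

Lemma Fzero_ge_nowhere_dense (c : R) : 0 < c ->
  nowhere_dense_in a b (Finf a b) (Fzero_ge a b c).
Proof.
move=> c0 U [UX Uopen] [f Uf].
have [e [e0 Ue]] := Uopen f Uf.
have e20 : 0 < e / 2 by rewrite divr_gt0.
have [g [k [Xg dfg k0 gk]]] := Finf_approx_ge_linear (UX f Uf) e20.
pose r := Num.min (e / 2) (k * c).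
have r0 : 0 < r by rewrite lt_min e20 mulr_gt0.
exists [set h | Finf a b h /\ (Linf_dist a b g h < r%:E)%E]; split; [|split; [|split]].
- exact: rel_open_Linf_ball.
- exists g; split=> //; apply: le_lt_trans (Linf_dist_le 0 _) _.
    by move=> s _; rewrite subrr normr0.
  by rewrite lte_fin.
- move=> h [Xh dgh]; apply: Ue => //; apply: le_lt_trans (Linf_dist_triangle f g h) _.
  rewrite [e]splitr EFinD; apply: lteD => //; apply: lt_le_trans dgh _.
  by rewrite lee_fin ge_min lexx.
- apply/seteqP; split=> // h [[_ dgh]].
  by apply: (Linf_ball_disjoint_Fzero_ge (ltW k0) _ gk dgh); rewrite ge_min lexx orbT.
Qed.

End nowhere_dense.

Theorem proposition11 (R : realType) (a b : R) :
  0 <= a -> a < b -> b <= 1 ->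
  first_category_in a b (Finf a b) (Fzero a b).
Proof.
move=> a0 ab _.
exists (fun n => Fzero_ge a b n.+1%:R^-1); split=> [n|f [Xf [z1 [z2 [az1 [z12 [z2b fz]]]]]]].
  by apply: Fzero_ge_nowhere_dense; rewrite // invr_gt0.
have [n _ /(_ n (leqnn n)) nz1] := near_infty_natSinv_lt (PosNum (le_lt_trans a0 az1)).
by exists n => //; split=> //; exists z1, z2; rewrite (ltW nz1).
Qed.
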